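(* Let $B$ be a UFD and $A$ a subring of $B$. Then the following are equivalent: (I) $A$ is a retract of $B$ and $A=B^{\phi}$ for some $\phi\in\operatorname{Exp}_A(B)$ with $\phi\neq\mathrm{Id}$; (II) $B=A^{[1]}$, i.e. $B=A[T]$ for some $T\in B$ transcendental over $A$. In particular, if $R$ is a UFD and $A$ is an $R$-subalgebra of the polynomial ring $B=R[X_1,\dots,X_n]$ satisfying (I), then $B=A^{[1]}$.
   Context: A subring $A$ of a ring $B$ is a retract of $B$ if there is an idempotent ring endomorphism $\pi:B\to B$ with $\pi(B)=A$. For a ring $B$ and an indeterminate $U$, an exponential map on $B$ over a subring $C$ is a $C$-algebra homomorphism $\phi_U:B\to B[U]$ such that composing with evaluation at $U=0$ gives the identity on $B$ and $\phi_V\phi_U=\phi_{V+U}$ (with $\phi_V$ extended to $B[U]\to B[V,U]$ by $\phi_V(U)=U$). $\operatorname{Exp}_C(B)$ denotes the set of these; $B^{\phi}=\{b\in B:\phi(b)=b\}$ is the ring of invariants. *)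

From HB Require Import structures.
From mathcomp Require Import all_boot all_order all_algebra.
Set Implicit Arguments. Unset Strict Implicit. Unset Printing Implicit Defensive.
Import Order.TTheory GRing.Theory Num.Theory.
Local Open Scope ring_scope.

Definition associated (R : idomainType) (x y : R) : Prop :=
  exists u : R, u \is a GRing.unit /\ y = u * x.

Definition irreducible_elt (R : idomainType) (x : R) : Prop :=
  [/\ x != 0, x \isn't a GRing.unit &
      forall a b : R, x = a * b -> a \is a GRing.unit \/ b \is a GRing.unit].

Definition is_UFD (R : idomainType) : Prop :=
  (forall x : R, x != 0 -> x \isn't a GRing.unit ->
     exists s : seq R, (forall p, p \in s -> irreducible_elt p) /\ x = \prod_(p <- s) p)
  /\
  (forall s t : seq R,
     (forall p, p \in s -> irreducible_elt p) ->
     (forall p, p \in t -> irreducible_elt p) ->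
     \prod_(p <- s) p = \prod_(p <- t) p ->
     exists t' : seq R, perm_eq t t' /\ size s = size t' /\
       forall i, (i < size s)%N -> associated (nth 0 s i) (nth 0 t' i)).

Definition is_retract (B : comNzRingType) (A : pred B) : Prop :=
  exists pi : {rmorphism B -> B},
    (forall b, pi (pi b) = pi b) /\
    (forall x, x \in A <-> exists b, pi b = x).

(* phi : B -> B[U] ({poly B}, variable U).  B[V,U] is represented as
   {poly {poly B}}: outer variable U, inner variable V.
   - phi_V extended to B[U] -> B[V,U] (with U |-> U) is  map_poly phi.
   - phi_{V+U}(b) is (phi b) with its variable replaced by V + U, i.e.
     (phi b)^:P \Po ('X + ('X)%:P)  (outer 'X = U, ('X)%:P = V). *)
Definition is_exp_map (B : comNzRingType) (C : pred B)
  (phi : {rmorphism B -> {poly B}}) : Prop :=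
  [/\ (forall c, c \in C -> phi c = c%:P),
      (forall b, (phi b).[0] = b)
    & (forall b, map_poly phi (phi b) = (phi b)^:P \Po ('X + ('X)%:P))].

Definition invariants (B : comNzRingType) (phi : B -> {poly B}) : pred B :=
  fun b => phi b == b%:P.

Definition exp_map_is_id (B : comNzRingType) (phi : B -> {poly B}) : Prop :=
  forall b, phi b = b%:P.

Definition is_poly_ring_in_one_var_over (B : comNzRingType) (A : pred B) : Prop :=
  exists T : B,
    (forall b : B, exists p : {poly B}, p \is a polyOver A /\ b = p.[T]) /\
    (forall p : {poly B}, p \is a polyOver A -> p.[T] = 0 -> p = 0).

Fixpoint poly_ring_n (R : idomainType) (n : nat) : idomainType :=
  match n with
  | 0 => R
  | n'.+1 => {poly (poly_ring_n R n')}
  end.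

Fixpoint const_n (R : idomainType) (n : nat) : R -> poly_ring_n R n :=
  match n return R -> poly_ring_n R n with
  | 0 => fun r => r
  | n'.+1 => fun r => (const_n n' r)%:P
  end.

From HB Require Import structures.
From mathcomp Require Import all_boot all_order all_algebra.
From Stdlib Require Import Classical.
From mathcomp Require Import ring zify.
Set Implicit Arguments. Unset Strict Implicit. Unset Printing Implicit Defensive.
Import Order.TTheory GRing.Theory Num.Theory.
Local Open Scope ring_scope.

(* (II) => (I): if B = A[T], substituting T + U for T is a nontrivial exponential
   map with invariant ring A, and evaluation at T = 0 is a retraction onto A.

   (I) => (II): write deg b and lc b for the degree and leading coefficient of
   phi(b) in U. Then deg is additive, so A = B^phi is factorially closed, and the
   exponential law says the coefficients of phi(b) are its Hasse derivatives; hence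
   lc b lies in A, and if d > 0 is the least degree of an element outside A, the
   binomial coefficients C(deg b, i) vanish for deg b - d < i < deg b, which forces
   d | deg b. Starting from g0 - pi g0 with deg g0 = d and dividing out the primes
   shared by lc g and g, we get g of degree d with pi g = 0 whose leading coefficient
   has no prime factor dividing g. Now lc(g)^k b - lc(b) g^k has lower degree than b
   when deg b = k d, and primes p of A not dividing g cancel from A[g] (apply pi to
   p y = P(g) to see that p divides the constant term), so B = A[g] by induction on
   the degree; g is transcendental over A because phi(g) has positive degree. *)

(** * Prime factorizations *)

Lemma ex_minn_prop (P : nat -> Prop) n : P n ->
  exists m, P m /\ forall k, P k -> (m <= k)%N.
Proof.
elim/ltn_ind: n => n IH Pn.
have [[k [Pk kn]]|noless] := classic (exists k, P k /\ (k < n)%N); first exact: IH Pk.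
by exists n; split=> // k Pk; rewrite leqNgt; apply/negP => kn; apply: noless; exists k.
Qed.

Section Divisibility.
Variable D : idomainType.
Implicit Types x y z p q u : D.

Definition dvdr x y := exists z, y = z * x.

Definition prime_elt p := [/\ p != 0, p \isn't a GRing.unit &
  forall x y, dvdr p (x * y) -> dvdr p x \/ dvdr p y].

Definition factorizable x := exists u (s : seq D),
  [/\ u \is a GRing.unit, {in s, forall q, prime_elt q} & x = u * \prod_(q <- s) q].

Definition factorial_domain := forall x, x != 0 -> factorizable x.

Lemma unit_neq0 u : u \is a GRing.unit -> u != 0.
Proof. by apply: contraTneq => ->; rewrite unitr0. Qed.

Lemma dvdr0 x : dvdr x 0. Proof. by exists 0; rewrite mul0r. Qed.
Lemma dvdrr x : dvdr x x. Proof. by exists 1; rewrite mul1r. Qed.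

Lemma dvdr_trans x y z : dvdr x y -> dvdr y z -> dvdr x z.
Proof. by move=> [a ->] [b ->]; exists (b * a); rewrite mulrA. Qed.

Lemma dvdr_mull x y z : dvdr x y -> dvdr x (z * y).
Proof. by move=> [a ->]; exists (z * a); rewrite mulrA. Qed.

Lemma dvdr_mulr x y z : dvdr x y -> dvdr x (y * z).
Proof. by move=> xy; rewrite mulrC; apply: dvdr_mull. Qed.

Lemma dvdr_unit x u : dvdr x u -> u \is a GRing.unit -> x \is a GRing.unit.
Proof. by move=> [a ->]; rewrite unitrM => /andP[]. Qed.

Lemma dvdr_prod_mem (s : seq D) q : q \in s -> dvdr q (\prod_(r <- s) r).
Proof. by move=> qs; rewrite (big_rem _ qs) /=; apply: dvdr_mulr; apply: dvdrr. Qed.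

Lemma prime_dvd_prod p (s : seq D) : prime_elt p -> dvdr p (\prod_(q <- s) q) ->
  exists2 q, q \in s & dvdr p q.
Proof.
move=> [_ pN1 pP]; elim: s => [|a s IH]; rewrite ?big_nil ?big_cons.
  by move/dvdr_unit; rewrite unitr1 => /(_ isT); rewrite (negPf pN1).
case/pP => [|/IH [q qs pq]]; first by exists a; rewrite ?mem_head.
by exists q; rewrite // inE qs orbT.
Qed.

Lemma prime_dvd_prime p q : prime_elt p -> prime_elt q -> dvdr p q ->
  exists2 w, w \is a GRing.unit & q = w * p.
Proof.
move=> [p0 pN1 _] [q0 _ qP] [w qE]; exists w => //.
have qwp : dvdr q (w * p) by rewrite -qE; apply: dvdrr.
have [[v wE]|[v pE]] := qP w p qwp.
  have vp1 : v * p = 1 by apply: (mulfI q0); rewrite mulr1 {2}qE wE; ring.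
  by case/negP: pN1; apply/unitrP; exists v; split; rewrite // mulrC.
have vw1 : v * w = 1 by apply: (mulfI q0); rewrite mulr1 {2}qE pE; ring.
by apply/unitrP; exists v; split; rewrite // mulrC.
Qed.

Lemma prime_dvdr_exp p x k : prime_elt p ->
  dvdr p (x ^+ k) -> dvdr p x.
Proof.
move=> [_ pN1 pM]; elim: k => [|k IH].
  by move/dvdr_unit; rewrite unitr1 (negPf pN1) => /(_ isT).
by rewrite exprS => /pM [|/IH].
Qed.

Lemma prod_prime_neq0 (s : seq D) : {in s, forall q, prime_elt q} -> \prod_(q <- s) q != 0.
Proof. by move=> sP; rewrite prodf_seq_neq0; apply/allP => q /sP[]. Qed.

Lemma factorizable_unit u : u \is a GRing.unit -> factorizable u.
Proof. by exists u, [::]; rewrite big_nil mulr1. Qed.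

Lemma factorizableM x y : factorizable x -> factorizable y -> factorizable (x * y).
Proof.
move=> [u [s [uU sP ->]]] [v [t [vU tP ->]]]; exists (u * v), (s ++ t); split.
- by rewrite unitrM uU.
- by move=> q; rewrite mem_cat => /orP[/sP|/tP].
- by rewrite big_cat /=; ring.
Qed.

Lemma factorizable_prime p : prime_elt p -> factorizable p.
Proof.
move=> pP; exists 1, [:: p]; split; rewrite ?unitr1 ?big_seq1 ?mul1r //.
by move=> q; rewrite inE => /eqP->.
Qed.

Lemma factorial_ind (P : D -> Prop) : factorial_domain ->
  (forall u, u \is a GRing.unit -> P u) ->
  (forall x p, x != 0 -> prime_elt p -> P x -> P (x * p)) ->
  forall x, x != 0 -> P x.
Proof.
move=> DF Punit PM x /DF [u [s [uU sP ->]]] {x}.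
elim: s sP => [|p s IH] sP; first by rewrite big_nil mulr1; apply: Punit.
have sP' : {in s, forall q, prime_elt q} by move=> q qs; apply: sP; rewrite inE qs orbT.
rewrite big_cons mulrCA mulrC; apply: PM; last exact: IH.
  exact: mulf_neq0 (unit_neq0 uU) (prod_prime_neq0 sP').
by apply: sP; rewrite mem_head.
Qed.

Lemma factorial_descent_ind (P : D -> Prop) : factorial_domain ->
  (forall x, x != 0 -> (forall y p, prime_elt p -> x = y * p -> P y) -> P x) ->
  forall x, x != 0 -> P x.
Proof.
move=> DF Pstep x /DF [u [s [uU sP ->]]] {x}.
have [n] := ubnP (size s); elim: n s u uU sP => // n IH s u uU sP /ltnSE sn.
apply: Pstep; first exact: mulf_neq0 (unit_neq0 uU) (prod_prime_neq0 sP).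
move=> y p pP E.
have [p0 _ _] := pP.
have [q qs /(prime_dvd_prime pP (sP q qs)) [w wU qE]] : exists2 q, q \in s & dvdr p q.
  by apply: prime_dvd_prod => //; exists (u^-1 * y); rewrite -mulrA -E mulKr.
have -> : y = (u * w) * \prod_(r <- rem q s) r.
  by apply: (mulIf p0); rewrite -E (big_rem _ qs) qE /=; ring.
apply: IH; [by rewrite unitrM uU | by move=> r /mem_rem /sP |].
rewrite size_rem // (leq_trans _ sn) // ltn_predL lt0n size_eq0.
by apply: contraTneq qs => ->.
Qed.

Lemma factorial_prime_dvdr x : factorial_domain ->
  x != 0 -> x \isn't a GRing.unit -> exists2 p, prime_elt p & dvdr p x.
Proof.
move=> DF x0 xN1; have [u [[|p s] [uU sP xE]]] := DF x x0.
  by case/negP: xN1; rewrite xE big_nil mulr1.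
exists p; first by apply: sP; rewrite mem_head.
by rewrite xE big_cons mulrCA; apply: dvdr_mulr; apply: dvdrr.
Qed.

End Divisibility.

Section UniqueFactorization.
Variable D : idomainType.
Hypothesis DU : is_UFD D.
Implicit Types x y q u : D.

Lemma irreducible_eltM_unit q u : irreducible_elt q -> u \is a GRing.unit ->
  irreducible_elt (u * q).
Proof.
move=> [q0 qN1 qI] uU; split.
- exact: mulf_neq0 (unit_neq0 uU) q0.
- by rewrite unitrM uU.
move=> a b E; have : q = (u^-1 * a) * b by rewrite -mulrA -E mulKr.
by case/qI => [|->]; [rewrite unitrM unitrV uU => /= ->; left | right].
Qed.

Lemma UFD_irreducible_factorization x : x != 0 -> exists u (s : seq D),
  [/\ u \is a GRing.unit, {in s, forall q, irreducible_elt q} & x = u * \prod_(q <- s) q].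
Proof.
move=> x0; have [xU|xN1] := boolP (x \is a GRing.unit).
  by exists x, [::]; rewrite big_nil mulr1.
have [s [sI ->]] := DU.1 x x0 xN1.
by exists 1, s; rewrite unitr1 mul1r.
Qed.

Lemma UFD_irreducible_dvd_prod q u (s : seq D) : irreducible_elt q ->
  u \is a GRing.unit -> {in s, forall r, irreducible_elt r} ->
  dvdr q (u * \prod_(r <- s) r) -> exists2 r, r \in s & dvdr q r.
Proof.
move=> qI uU sI [z zE]; have [q0 qN1 _] := qI.
have us0 : u * \prod_(r <- s) r != 0.
  by apply: mulf_neq0 (unit_neq0 uU) _; rewrite prodf_seq_neq0; apply/allP => r /sI[].
have z0 : z != 0 by apply: contraNneq us0 => z0; rewrite zE z0 mul0r.
have [uz [sz [uzU szI zE']]] := UFD_irreducible_factorization z0.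
case: s sI zE {us0} => [|a s] sI zE.
  by case/negP: qN1; apply: (dvdr_unit _ uU); exists z; rewrite -zE big_nil mulr1.
have LI : {in (uz * q) :: sz, forall r, irreducible_elt r}.
  by move=> r; rewrite inE => /orP[/eqP->|/szI//]; apply: irreducible_eltM_unit.
have TI : {in (u * a) :: s, forall r, irreducible_elt r}.
  move=> r; rewrite inE => /orP[/eqP->|rs]; last by apply: sI; rewrite inE rs orbT.
  by apply: irreducible_eltM_unit => //; apply: sI; rewrite mem_head.
have LT : \prod_(r <- (uz * q) :: sz) r = \prod_(r <- (u * a) :: s) r.
  rewrite !big_cons; transitivity (z * q); first by rewrite zE'; ring.
  by rewrite -zE big_cons; ring.
have [t [Tt [_ assoc]]] := DU.2 _ _ LI TI LT.
have [w [wU t0E]] := assoc 0%N isT.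
have : nth 0 t 0 \in (u * a) :: s by rewrite (perm_mem Tt) mem_nth // -(perm_size Tt).
rewrite inE => /orP[/eqP t0a|t0s].
  exists a; first by rewrite mem_head.
  by exists (u^-1 * w * uz); rewrite -[a](mulKr uU) -t0a t0E /=; ring.
by exists (nth 0 t 0); [rewrite inE t0s orbT | exists (w * uz); rewrite t0E /=; ring].
Qed.

Lemma UFD_irreducible_prime q : irreducible_elt q -> prime_elt q.
Proof.
move=> qI; have [q0 qN1 _] := qI; split => // x y qxy.
have [->|x0] := eqVneq x 0; first by left; apply: dvdr0.
have [->|y0] := eqVneq y 0; first by right; apply: dvdr0.
have [ux [sx [uxU sxI xE]]] := UFD_irreducible_factorization x0.
have [uy [sy [uyU syI yE]]] := UFD_irreducible_factorization y0.
have xyE : x * y = (ux * uy) * \prod_(r <- sx ++ sy) r by rewrite big_cat xE yE /=; ring.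
have sI : {in sx ++ sy, forall r, irreducible_elt r}.
  by move=> r; rewrite mem_cat => /orP[/sxI|/syI].
have uxyU : ux * uy \is a GRing.unit by rewrite unitrM uxU.
have [r] := UFD_irreducible_dvd_prod qI uxyU sI (eq_ind _ (dvdr q) qxy _ xyE).
rewrite mem_cat => /orP[] rs qr; [left; rewrite xE | right; rewrite yE];
  by apply: (dvdr_trans qr); apply: dvdr_mull; apply: dvdr_prod_mem.
Qed.

Lemma UFD_factorial : factorial_domain D.
Proof.
move=> x /UFD_irreducible_factorization [u [s [uU sI ->]]]; exists u, s.
by split=> // q /sI /UFD_irreducible_prime.
Qed.

End UniqueFactorization.

(** * Gauss's lemma *)

Lemma drop_poly1E (R : nzRingType) (f : {poly R}) : f = drop_poly 1 f * 'X + (f`_0)%:P.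
Proof.
apply/polyP => -[|i]; rewrite coefD coefMX coef_drop_poly coefC /=.
  by rewrite add0r.
by rewrite addr0 addn1.
Qed.

Section GaussLemma.
Variable D : idomainType.
Implicit Types (c p : D) (f g h m q : {poly D}).

Lemma dvdr_polyC_coef c f i : dvdr c%:P f -> dvdr c f`_i.
Proof. by move=> [z ->]; exists z`_i; rewrite coefMC. Qed.

Lemma dvdr_polyC_mulX c f : c != 0 -> dvdr c%:P (f * 'X) -> dvdr c%:P f.
Proof.
move=> c0 [z zE]; have z_0 : z`_0 = 0.
  have := congr1 (fun k : {poly D} => k`_0) zE; rewrite /= coefMX coefMC /=.
  by move/esym/eqP; rewrite mulf_eq0 (negPf c0) orbF => /eqP.
exists (drop_poly 1 z); apply: (@mulIf _ 'X); first by rewrite polyX_eq0.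
by rewrite zE {1}[z]drop_poly1E z_0 addr0 mulrAC.
Qed.

Lemma prime_eltC p : prime_elt p -> prime_elt p%:P.
Proof.
move=> pP; have [p0 pN1 pM] := pP; split.
- by rewrite polyC_eq0.
- by rewrite poly_unitE coefC size_polyC p0.
move=> f g; have [n] := ubnP (size f + size g); elim: n f g => // n IH f g.
move=> /ltnSE fgn fg.
wlog pf0 : f g fgn fg / dvdr p f`_0.
  move=> W; have : dvdr p (f`_0 * g`_0) by rewrite -coef0M; apply: dvdr_polyC_coef.
  case/pM => [|pg0]; first exact: W.
  by rewrite or_comm; apply: W; rewrite 1?addnC 1?mulrC.
have [a f0E] := pf0.
have fgX : dvdr p%:P (drop_poly 1 f * g * 'X).
  have -> : drop_poly 1 f * g * 'X = f * g - (a%:P * g) * p%:P.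
    by rewrite {2}[f]drop_poly1E f0E polyCM; ring.
  by move: fg => [z ->]; exists (z - a%:P * g); rewrite mulrBl.
have [->|f_neq0] := eqVneq f 0; first by left; apply: dvdr0.
have dropn : (size (drop_poly 1 f) + size g < n)%N.
  by rewrite size_drop_poly (leq_trans _ fgn) // ltn_add2r subn1 ltn_predL size_poly_gt0.
case: (IH _ _ dropn (dvdr_polyC_mulX p0 fgX)) => [[z zE]|]; last by right.
by left; exists (z * 'X + a%:P); rewrite [f]drop_poly1E zE f0E polyCM; ring.
Qed.

Definition primitive_poly f := forall p, prime_elt p -> ~ dvdr p%:P f.

Lemma dvdr_primitive g f : dvdr g f -> primitive_poly f -> primitive_poly g.
Proof. by move=> gf fP p pP /dvdr_trans/(_ gf); apply: fP. Qed.

Hypothesis DF : factorial_domain D.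

Lemma primitive_size_gt1 f : f != 0 -> primitive_poly f -> f \isn't a GRing.unit ->
  (1 < size f)%N.
Proof.
move=> f0 fP; apply: contraR; rewrite -leqNgt => /size1_polyC fE.
have c0 : f`_0 != 0 by apply: contraNneq f0 => c0; rewrite fE c0.
have [cU|cN1] := boolP (f`_0 \is a GRing.unit); first by rewrite fE rmorph_unit.
have [p pP [z zE]] := factorial_prime_dvdr DF c0 cN1.
by case: (fP p pP); rewrite fE zE polyCM; apply: dvdr_mull; apply: dvdrr.
Qed.

Lemma primitive_dvdr_mulC f c y : primitive_poly f -> c != 0 ->
  dvdr f (c%:P * y) -> dvdr f y.
Proof.
move=> fP c0; move: c c0 y; apply: (factorial_ind DF) => [u uU|x p _ pP IH] y [z zE].
  by exists (u^-1%:P * z); rewrite -mulrA -zE mulrA -polyCM mulVr ?mul1r.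
have [p0 _ pM] := prime_eltC pP.
have : dvdr p%:P (z * f) by rewrite -zE polyCM mulrAC; apply: dvdr_mull; apply: dvdrr.
case/pM => [[w wE]|/(fP p pP)//]; apply: IH; exists w.
apply: (mulIf p0); transitivity (z * f); last by rewrite wE mulrAC.
by rewrite -zE polyCM mulrAC.
Qed.

Lemma polyC_mul_factor e f q m : e != 0 -> e%:P * f = q * m ->
  exists c q' m', [/\ c != 0, f = q' * m' & m = c%:P * m'].
Proof.
move=> e0; move: e e0 q m; apply: (factorial_ind DF) => [u uU|x p _ pP IH] q m E.
  exists 1, (u^-1%:P * q), m; rewrite oner_neq0 mul1r -mulrA -E mulrA -polyCM.
  by rewrite mulVr ?mul1r.
have [p0 _ pM] := prime_eltC pP.
have : dvdr p%:P (q * m) by rewrite -E polyCM mulrAC; apply: dvdr_mull; apply: dvdrr.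
case/pM => [[q1 qE]|[m1 mE]].
  apply: (IH q1 m); apply: (mulIf p0); rewrite mulrAC -polyCM E qE; ring.
have [c [q' [m' [c0 fE m1E]]]] : exists c q' m', [/\ c != 0, f = q' * m' & m1 = c%:P * m'].
  by apply: (IH q m1); apply: (mulIf p0); rewrite mulrAC -polyCM E mE; ring.
have [pn0 _ _] := pP.
by exists (c * p), q', m'; rewrite mulf_neq0 // mE m1E polyCM; split=> //; ring.
Qed.

Definition in_ideal2 f g x := exists a b, x = a * f + b * g.

Lemma pseudo_generator f g : f != 0 -> exists m, [/\ m != 0, in_ideal2 f g m &
  forall x, in_ideal2 f g x -> exists e q, e != 0 /\ e%:P * x = q * m].
Proof.
move=> f0; have fJ : in_ideal2 f g f by exists 1, 0; rewrite mul1r mul0r addr0.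
have [_ [[m [mJ m0 <-]] m_min]] := ex_minn_prop
  (P := fun n => exists m, [/\ in_ideal2 f g m, m != 0 & size m = n])
  (ex_intro _ f (And3 fJ f0 erefl)).
exists m; split=> // x [a [b xE]].
set e := lead_coef m ^+ scalp x m.
have xdiv : e *: x = x %/ m * m + x %% m := Pdiv.Idomain.divp_eq x m.
have rJ : in_ideal2 f g (x %% m).
  have [a1 [b1 mE]] := mJ.
  exists (e%:P * a - x %/ m * a1), (e%:P * b - x %/ m * b1).
  have -> : x %% m = e%:P * x - x %/ m * m.
    by rewrite mul_polyC xdiv addrAC subrr add0r.
  by set q := x %/ m; rewrite xE mE; ring.
have r0 : x %% m = 0.
  apply: contraTeq (Pdiv.Idomain.ltn_modpN0 x m0); rewrite -leqNgt => r0.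
  by apply: m_min; exists (x %% m).
exists e, (x %/ m); split; first exact: Pdiv.Idomain.lc_expn_scalp_neq0.
by rewrite mul_polyC xdiv r0 addr0.
Qed.

(* For the pseudo-generator [m] of the ideal (f, g), f = q' m' with m a constant
   multiple of m': if [q'] is a unit then f | g, and if [m'] is one then f | c h. *)
Lemma primitive_irreducible_prime f : primitive_poly f -> (1 < size f)%N ->
  (forall g h, f = g * h -> g \is a GRing.unit \/ h \is a GRing.unit) -> prime_elt f.
Proof.
move=> fP f_gt1 fI; have f0 : f != 0 by rewrite -size_poly_gt0 ltnW.
split=> //; first by rewrite poly_unitE (gtn_eqF f_gt1).
move=> g h [k ghE]; have [fg|fNg] := classic (dvdr f g); [by left | right].
have [m [m0 [a [b mE]] m_gen]] := pseudo_generator g f0.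
have [e [q [e0 eE]]] : exists e q, e != 0 /\ e%:P * f = q * m.
  by apply: m_gen; exists 1, 0; rewrite mul1r mul0r addr0.
have [c [q' [m' [c0 fE mE']]]] := polyC_mul_factor e0 eE.
case: (fI _ _ fE) => [q'U|m'U].
  have [e' [q2 [e'0 e'E]]] : exists e q, e != 0 /\ e%:P * g = q * m.
    by apply: m_gen; exists 0, 1; rewrite mul1r mul0r add0r.
  case: fNg; apply: (primitive_dvdr_mulC fP e'0); exists (q2 * c%:P * q'^-1).
  by rewrite e'E mE' -[m'](mulKr q'U) -fE; ring.
have m'E : m' = (m'`_0)%:P by apply: size1_polyC; move: m'U; rewrite poly_unitE => /andP[/eqP->].
have cm'0 : c * m'`_0 != 0.
  by rewrite mulf_neq0 // unit_neq0 //; move: m'U; rewrite poly_unitE => /andP[].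
apply: (primitive_dvdr_mulC fP cm'0); exists (a * h + b * k).
by rewrite polyCM -m'E -mE' mE mulrDl -(mulrA b) ghE; ring.
Qed.

Lemma primitive_factorizable f : f != 0 -> primitive_poly f -> factorizable f.
Proof.
have [n] := ubnP (size f); elim: n f => // n IH f /ltnSE fn f0 fP.
have [fU|fN1] := boolP (f \is a GRing.unit); first exact: factorizable_unit.
have f_gt1 := primitive_size_gt1 f0 fP fN1.
have [[g [h [fE gN1 hN1]]]|fI] :=
  classic (exists g h, [/\ f = g * h, g \isn't a GRing.unit & h \isn't a GRing.unit]).
  have g0 : g != 0 by apply: contraNneq f0 => g0; rewrite fE g0 mul0r.
  have h0 : h != 0 by apply: contraNneq f0 => h0; rewrite fE h0 mulr0.
  have gP : primitive_poly g by apply: dvdr_primitive fP; exists h; rewrite mulrC.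
  have hP : primitive_poly h by apply: dvdr_primitive fP; exists g.
  have := primitive_size_gt1 g0 gP gN1; have := primitive_size_gt1 h0 hP hN1.
  move: fn; rewrite fE size_mul // => sn sh sg.
  by apply: factorizableM; apply: IH => //; lia.
apply/factorizable_prime/primitive_irreducible_prime => // g h fE.
have [gU|gN1] := boolP (g \is a GRing.unit); first by left.
by right; apply: contra_notT fI => hN1; exists g, h.
Qed.

Lemma factorial_poly : factorial_domain {poly D}.
Proof.
suff lc_ind : forall c, c != 0 -> forall f, lead_coef f = c -> factorizable f.
  by move=> f f0; apply: (lc_ind (lead_coef f)); rewrite ?lead_coef_eq0.
apply: (factorial_descent_ind DF) => c c0 IH f fc.
have [[p [pP [h fE]]]|fP] := classic (exists p, prime_elt p /\ dvdr p%:P f).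
  rewrite fE; apply: factorizableM; last exact/factorizable_prime/prime_eltC.
  by apply: (IH (lead_coef h) p pP _ h erefl); rewrite -fc fE lead_coefM lead_coefC.
apply: primitive_factorizable; first by rewrite -lead_coef_eq0 fc.
by move=> p pP pf; apply: fP; exists p.
Qed.

End GaussLemma.

Lemma factorial_poly_ring_n (R : idomainType) n :
  factorial_domain R -> factorial_domain (poly_ring_n R n).
Proof. by move=> RF; elim: n => [|n IH] //=; apply: factorial_poly. Qed.

(** * Exponential maps *)

Lemma coef_taylor_shift (R : comNzRingType) (p : {poly R}) i :
  (p^:P \Po ('X + ('X)%:P))`_i = p^`N(i).
Proof.
elim/poly_ind: p i => [|p c IH] i.
  by rewrite rmorph0 comp_poly0 coef0 nderivn_poly0 // size_poly0.
rewrite rmorphD rmorphM /= map_polyX map_polyC /= comp_poly_MXaddC.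
rewrite mulrDr coefD coefD coefMX coefMC coefC IH.
case: i => [|n] /=; first by rewrite add0r nderivn0 IH nderivn0.
by rewrite addr0 nderivnMXaddC IH.
Qed.

Lemma coef_Xadd1_exp (R : nzRingType) n k : (('X + 1 : {poly R}) ^+ n)`_k = 'C(n, k)%:R.
Proof.
elim: n k => [|n IH] k; first by rewrite expr0 coef1 bin0n; case: k.
rewrite exprS mulrDl mul1r coefD coefXM; case: k => [|k] /=.
  by rewrite add0r IH !bin0.
by rewrite !IH binS natrD addrC.
Qed.

Lemma binomial_vanishing_dvdn (R : comNzRingType) (d n : nat) : (0 < d <= n)%N ->
  (forall i, (0 < i < d)%N -> 'C(d, i)%:R = 0 :> R) ->
  (forall i, (n - d < i < n)%N -> 'C(n, i)%:R = 0 :> R) -> (d %| n)%N.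
Proof.
move=> /andP[d_gt0 dn] Cd Cn; rewrite /dvdn; have [//|s_gt0] := posnP (n %% d).
set q := (n %/ d)%N; set s := (n %% d)%N in s_gt0 *.
have nE : n = (q * d + s)%N by rewrite /q /s -divn_eq.
have sd : (s < d)%N by rewrite /s ltn_mod.
pose P : {poly R} := 'X + 1.
have PdE : P ^+ d = 'X^d + 1.
  apply/polyP => k; rewrite coef_Xadd1_exp coefD coefXn coef1.
  case: (ltngtP k d) => [kd|dk|->]; last by rewrite binn (gtn_eqF d_gt0) addr0.
    by case: k kd => [|k] kd; rewrite ?bin0 ?add0r // Cd ?kd //= add0r.
  by rewrite bin_small // (gtn_eqF (ltn_trans d_gt0 dk)) addr0.
have PnE : P ^+ n = (P ^+ q \Po 'X^d) * P ^+ s.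
  rewrite nE exprD mulnC exprM PdE rmorphXn /= comp_polyD comp_polyX comp_polyC.
  by rewrite -polyC1.
have : (P ^+ n)`_(q * d) = 1.
  rewrite PnE coefM big_ord_recr /= subnn coef_comp_poly_Xn // dvdn_mull //.
  rewrite mulnK // !coef_Xadd1_exp !binn bin0 mulr1 big1 ?add0r // => j _.
  rewrite coef_comp_poly_Xn //; case: ifP => [/dvdnP [e je]|]; last by rewrite mul0r.
  rewrite [X in _ * X]coef_Xadd1_exp bin_small ?mulr0 //.
  have eq : (e < q)%N by have := ltn_ord j; rewrite je ltn_pmul2r.
  rewrite je -mulnBl; apply: (leq_trans sd); rewrite leq_pmull // subn_gt0 //.
rewrite coef_Xadd1_exp Cn; first by move/esym/eqP; rewrite oner_eq0.
by rewrite nE; move: sd s_gt0; lia.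
Qed.

Section Subring.
Variable B : idomainType.
Variable A : {pred B}.
Hypothesis A_subring : subring_closed A.
#[local] HB.instance Definition _ := GRing.isSubringClosed.Build B A A_subring.

Lemma polyOver_MXaddC (P : {poly B}) c : P * 'X + c%:P \is a polyOver A ->
  P \is a polyOver A /\ c \in A.
Proof.
move/polyOverP => PA; split; last by have := PA 0%N; rewrite coefD coefMX coefC add0r.
by apply/polyOverP => i; have := PA i.+1; rewrite coefD coefMX coefC addr0.
Qed.

Definition in_adjoin (g y : B) := exists2 Q : {poly B}, Q \is a polyOver A & y = Q.[g].

Lemma in_adjoinC g a : a \in A -> in_adjoin g a.
Proof. by move=> aA; exists a%:P; rewrite ?polyOverC ?hornerC. Qed.

Lemma in_adjoinX g k : in_adjoin g (g ^+ k).
Proof. by exists 'X^k; rewrite ?polyOverXn ?hornerXn. Qed.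

Lemma in_adjoinD g x y : in_adjoin g x -> in_adjoin g y -> in_adjoin g (x + y).
Proof. by move=> [P PA ->] [Q QA ->]; exists (P + Q); rewrite ?rpredD ?hornerD. Qed.

Lemma in_adjoinM g x y : in_adjoin g x -> in_adjoin g y -> in_adjoin g (x * y).
Proof. by move=> [P PA ->] [Q QA ->]; exists (P * Q); rewrite ?rpredM ?hornerM. Qed.

Section ExponentialMap.
Variable phi : {rmorphism B -> {poly B}}.
Hypothesis phi_exp : is_exp_map A phi.
Hypothesis A_invariants : forall b, b \in A <-> b \in invariants phi.

Lemma phi_invariant b : b \in A <-> phi b = b%:P.
Proof.
split=> [|bphi]; first by case: phi_exp => phiA _ _; apply: phiA.
by apply/A_invariants; rewrite unfold_in /= bphi.
Qed.

Lemma phiC a : a \in A -> phi a = a%:P.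
Proof. by move/phi_invariant. Qed.

Lemma phi_eq0 b : (phi b == 0) = (b == 0).
Proof.
apply/eqP/eqP => [phib0|->]; last exact: rmorph0.
by case: phi_exp => _ phi_eval0 _; rewrite -(phi_eval0 b) phib0 horner0.
Qed.

Definition phi_deg b := (size (phi b)).-1.
Definition phi_lc b := lead_coef (phi b).

Lemma size_phi b : b != 0 -> size (phi b) = (phi_deg b).+1.
Proof. by move=> b0; rewrite prednK // size_poly_gt0 phi_eq0. Qed.

Lemma phi_deg_gt0_neq0 b : (0 < phi_deg b)%N -> b != 0.
Proof. by apply: contraTneq => ->; rewrite /phi_deg rmorph0 size_poly0. Qed.

Lemma phi_deg_eq0 b : (phi_deg b == 0)%N = (b \in A).
Proof.
apply/eqP/idP => [|/phi_invariant bphi]; last by rewrite /phi_deg bphi size_polyC; case: (_ != 0).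
move=> deg0; apply/phi_invariant; have /size1_polyC-> : (size (phi b) <= 1)%N.
  by move: deg0; rewrite /phi_deg; case: (size _) => [|[]].
by case: phi_exp => _ phi_eval0 _; rewrite -horner_coef0 phi_eval0.
Qed.

Lemma phi_lc_eq0 b : (phi_lc b == 0) = (b == 0).
Proof. by rewrite lead_coef_eq0 phi_eq0. Qed.

Lemma phi_degM b c : b != 0 -> c != 0 -> phi_deg (b * c) = (phi_deg b + phi_deg c)%N.
Proof.
move=> b0 c0; rewrite {1}/phi_deg rmorphM size_mul ?phi_eq0 //.
by rewrite !size_phi // addSn addnS.
Qed.

Lemma phi_lcM b c : phi_lc (b * c) = phi_lc b * phi_lc c.
Proof. by rewrite /phi_lc rmorphM lead_coefM. Qed.

Lemma mem_A_factor x y : x * y \in A -> x * y != 0 -> x \in A.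
Proof.
move=> xyA xy0; have [x0 y0] : x != 0 /\ y != 0.
  by split; apply: contraNneq xy0 => ->; rewrite ?mul0r ?mulr0.
by move: xyA; rewrite -!phi_deg_eq0 phi_degM // addn_eq0 => /andP[].
Qed.

Lemma phi_coef b i : phi ((phi b)`_i) = (phi b)^`N(i).
Proof. by case: phi_exp => _ _ phi_law; rewrite -coef_map phi_law coef_taylor_shift. Qed.

Lemma phi_lc_mem b : phi_lc b \in A.
Proof.
apply/phi_invariant; rewrite /phi_lc lead_coefE phi_coef; apply/polyP => -[|k].
  by rewrite coef_nderivn coefC addn0 binn mulr1n.
rewrite coef_nderivn coefC nth_default ?mul0rn //.
by case: (size (phi b)) => [|m] //=; rewrite addnS ltnS leq_addr.
Qed.

Lemma size_phi_coef b i : leq (size (phi ((phi b)`_i))) (phi_deg b - i).+1.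
Proof.
rewrite phi_coef; apply/leq_sizeP => j ij; rewrite coef_nderivn nth_default ?mul0rn //.
have : (size (phi b) <= (phi_deg b).+1)%N by rewrite /phi_deg; case: (size _).
by move: ij; set D1 := phi_deg b; set S1 := size (phi b); lia.
Qed.

Lemma phi_degX b k : b != 0 -> phi_deg (b ^+ k) = (k * phi_deg b)%N.
Proof.
move=> b0; elim: k => [|k IH]; first by rewrite expr0 /phi_deg rmorph1 size_poly1.
by rewrite exprS phi_degM ?expf_neq0 // IH mulSn.
Qed.

Lemma phi_lcX b k : phi_lc (b ^+ k) = phi_lc b ^+ k.
Proof. by rewrite /phi_lc rmorphXn lead_coef_exp. Qed.

Lemma phi_deg_cross_sub b c : b != 0 -> c != 0 -> phi_deg b = phi_deg c ->
  (0 < phi_deg b)%N -> (phi_deg (phi_lc c * b - phi_lc b * c)%R < phi_deg b)%N.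
Proof.
move=> b0 c0 bc b_gt0; set m := phi_deg b in bc b_gt0 *.
suff : (size (phi (phi_lc c * b - phi_lc b * c)%R) <= m)%N.
  by rewrite /phi_deg; set S := size _; lia.
rewrite rmorphB !rmorphM (phiC (phi_lc_mem c)) (phiC (phi_lc_mem b)) !mul_polyC.
apply/leq_sizeP => j; rewrite leq_eqVlt => /orP[/eqP<-|mj].
  rewrite coefB !coefZ [_`_m]lead_coefE [X in (phi c)`_X]bc.
  by rewrite -[(phi c)`_(phi_deg c)]/(phi_lc c) mulrC subrr.
by rewrite coefB !coefZ !nth_default ?mulr0 ?subrr // ?size_phi // ?ltnS // -bc.
Qed.

Lemma phi_transcendental g P : g \notin A -> P \is a polyOver A -> P.[g] = 0 -> P = 0.
Proof.
move=> gNA PA Pg0; have g0 : g != 0 by apply: contraNneq gNA => ->; apply: rpred0.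
apply/eqP; rewrite -(@comp_poly_eq0 _ P (phi g)); last first.
  by rewrite size_phi // ltnS lt0n phi_deg_eq0.
have mapP : map_poly phi P = P^:P.
  by apply/polyP => i; rewrite !coef_map /= phiC //; apply: (polyOverP PA).
by rewrite /comp_poly -mapP horner_map /= Pg0 rmorph0.
Qed.

Variable pi : {rmorphism B -> B}.
Hypothesis pi_idem : forall b, pi (pi b) = pi b.
Hypothesis pi_im : forall x, x \in A <-> exists b, pi b = x.

Lemma pi_mem b : pi b \in A.
Proof. by apply/pi_im; exists b. Qed.

Lemma pi_id a : a \in A -> pi a = a.
Proof. by move/pi_im => [b <-]; apply: pi_idem. Qed.

Hypothesis BF : factorial_domain B.

Section MinimalDegree.
Variable d : nat.
Hypothesis d_gt0 : (0 < d)%N.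
Hypothesis d_min : forall b, b \notin A -> (d <= phi_deg b)%N.
Variable g0 : B.
Hypothesis g0_deg : phi_deg g0 = d.

Lemma mem_A_deg_lt b : (phi_deg b < d)%N -> b \in A.
Proof. by move=> bd; apply/negPn/negP => /d_min; rewrite leqNgt bd. Qed.

(* The coefficient [c] of [phi b] below has degree [< d], hence lies in [A], so its
   Hasse derivatives vanish; one of them is [lc b] times the binomial coefficient. *)
Lemma phi_deg_binomial_vanish b i : (phi_deg b - d < i < phi_deg b)%N ->
  'C(phi_deg b, i)%:R = 0 :> B.
Proof.
move=> /andP[lt_i i_lt].
have b0 : b != 0 by apply: phi_deg_gt0_neq0; apply: leq_ltn_trans i_lt.
set c := (phi b)`_i.
have cA : c \in A.
  apply: mem_A_deg_lt; have := size_phi_coef b i; rewrite -/c.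
  by move: lt_i i_lt; rewrite /phi_deg; set S := size (phi c); set D1 := (size (phi b)).-1; lia.
have := congr1 (fun p : {poly B} => p`_(phi_deg b - i)) (phiC cA).
rewrite /= phi_coef coef_nderivn coefC subnKC ?(ltnW i_lt) // subn_eq0 leqNgt i_lt /=.
rewrite -[(phi b)`_(phi_deg b)]/(phi_lc b) -(mulr_natr (phi_lc b)) => /eqP.
by rewrite mulf_eq0 phi_lc_eq0 (negPf b0) => /eqP.
Qed.

Lemma dvdn_phi_deg b : (d %| phi_deg b)%N.
Proof.
have [bA|bNA] := boolP (b \in A); first by move: bA; rewrite -phi_deg_eq0 => /eqP->.
apply: (binomial_vanishing_dvdn (R := B)); first by rewrite d_gt0 d_min.
  by move=> i id; rewrite -g0_deg; apply: phi_deg_binomial_vanish; rewrite g0_deg subnn.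
exact: phi_deg_binomial_vanish.
Qed.

Section Generator.
Variable g : B.
Hypothesis g_deg : phi_deg g = d.
Hypothesis pi_g : pi g = 0.

Lemma g_neq0 : g != 0.
Proof. by apply: phi_deg_gt0_neq0; rewrite g_deg. Qed.

(* Applying [pi] kills every positive power of [g], which isolates constant terms. *)
Lemma adjoin_cancel_prime p y : p \in A -> prime_elt p -> ~ dvdr p g ->
  in_adjoin g (p * y) -> in_adjoin g y.
Proof.
move=> pA [p0 _ pM] pNg [P PA]; elim/poly_ind: P PA y => [|P a IH] PA y E.
  move: E; rewrite horner0 => /eqP; rewrite mulf_eq0 (negPf p0) /= => /eqP->.
  exact: in_adjoinC (rpred0 _).
have [{}PA aA] := polyOver_MXaddC PA; rewrite hornerMXaddC in E.
have aE : p * pi y = a.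
  have := congr1 pi E; rewrite !rmorphM rmorphD rmorphM pi_g mulr0 add0r.
  by rewrite (pi_id pA) (pi_id aA).
have Pg : P.[g] * g = p * (y - pi y) by rewrite mulrBr E aE addrK.
have [[z zE]|//] := pM P.[g] g (ex_intro _ (y - pi y) (etrans Pg (mulrC _ _))).
have [Q QA zQ] := IH PA z (etrans (mulrC _ _) (esym zE)).
have -> : y = z * g + pi y.
  by apply: (mulfI p0); rewrite mulrDr mulrA [p * z]mulrC -zE Pg; ring.
by apply: in_adjoinD (in_adjoinC _ (pi_mem y)); apply: in_adjoinM (in_adjoinX g 1); exists Q.
Qed.

Hypothesis g_lc_coprime : forall p, prime_elt p -> dvdr p (phi_lc g) -> ~ dvdr p g.

Lemma adjoin_cancel_lc k y : in_adjoin g (phi_lc g ^+ k * y) -> in_adjoin g y.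
Proof.
suff cancel_c c : c != 0 -> c \in A ->
    (forall p, prime_elt p -> dvdr p c -> ~ dvdr p g) ->
    forall y, in_adjoin g (c * y) -> in_adjoin g y.
  apply: cancel_c; first by rewrite expf_neq0 // phi_lc_eq0 g_neq0.
    by rewrite rpredX // phi_lc_mem.
  by move=> p pP /(prime_dvdr_exp pP); apply: g_lc_coprime.
move: c; apply: (factorial_ind BF) => [u uU uA _|x p x0 pP IH xpA xpNg] {}y.
  have uVA : u^-1 \in A by apply: (@mem_A_factor _ u); rewrite mulVr ?rpred1 ?oner_neq0.
  by move/(in_adjoinM (in_adjoinC g uVA)); rewrite mulKr.
have [p0 _ _] := pP.
have xp0 : x * p != 0 by rewrite mulf_neq0.
have xA : x \in A := mem_A_factor xpA xp0.
have pA : p \in A by apply: (@mem_A_factor _ x); rewrite mulrC.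
rewrite -mulrA mulrCA => /(adjoin_cancel_prime pA pP (xpNg p pP (dvdr_mull x (dvdrr p)))).
by apply: IH => // q qP qx; apply: xpNg qP (dvdr_mulr p qx).
Qed.

Lemma in_adjoin_all b : in_adjoin g b.
Proof.
have [n] := ubnP (phi_deg b); elim: n b => // n IH b /ltnSE bn.
have [bA|bNA] := boolP (b \in A); first exact: in_adjoinC.
have b0 : b != 0 by apply: contraNneq bNA => ->; apply: rpred0.
have /dvdnP[k degE] := dvdn_phi_deg b.
have gk0 : g ^+ k != 0 by rewrite expf_neq0 // g_neq0.
have deg_gk : phi_deg b = phi_deg (g ^+ k) by rewrite phi_degX ?g_neq0 // g_deg degE.
have b_gt0 : (0 < phi_deg b)%N by rewrite lt0n phi_deg_eq0.
apply: (adjoin_cancel_lc (k := k)); rewrite -phi_lcX -[_ * b](subrK (phi_lc b * g ^+ k)).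
apply: in_adjoinD; last exact: in_adjoinM (in_adjoinC _ (phi_lc_mem b)) (in_adjoinX g k).
by apply: IH; apply: leq_trans (phi_deg_cross_sub b0 gk0 deg_gk b_gt0) bn.
Qed.

End Generator.

(* Divide [g0 - pi g0] by the primes its leading coefficient shares with it. *)
Lemma exists_generator : exists g, [/\ phi_deg g = d, pi g = 0 &
  forall p, prime_elt p -> dvdr p (phi_lc g) -> ~ dvdr p g].
Proof.
have nonconst g : phi_deg g = d -> g != 0.
  by move=> g_deg; apply: phi_deg_gt0_neq0; rewrite g_deg.
set g1 := g0 - pi g0.
have phi_g1 : phi g1 = phi g0 + - (pi g0)%:P by rewrite rmorphB (phiC (pi_mem g0)).
have size_pi : (size (- (pi g0)%:P) < size (phi g0))%N.
  by rewrite size_polyN size_phi ?nonconst // g0_deg ltnS (leq_trans (size_polyC_leq1 _)).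
have g1_deg : phi_deg g1 = d by rewrite /phi_deg phi_g1 size_polyDl.
have pi_g1 : pi g1 = 0 by rewrite rmorphB pi_idem subrr.
suff lc_ind c : c != 0 -> forall g, phi_lc g = c -> phi_deg g = d -> pi g = 0 ->
    exists g, [/\ phi_deg g = d, pi g = 0 &
      forall p, prime_elt p -> dvdr p (phi_lc g) -> ~ dvdr p g].
  by apply: (lc_ind (phi_lc g1)) => //; rewrite phi_lc_eq0 nonconst.
move: c; apply: (factorial_descent_ind BF) => c c0 IH g gc g_deg pi_g.
have [[p [pP pc [w gE]]]|coprime] :=
  classic (exists p, [/\ prime_elt p, dvdr p (phi_lc g) & dvdr p g]); last first.
  by exists g; split=> // p pP pc pg; apply: coprime; exists p.
have [p0 _ _] := pP.
have pA : p \in A.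
  have [z zE] := pc; apply: (@mem_A_factor _ z); rewrite mulrC -zE ?phi_lc_mem //.
  by rewrite gc.
have w0 : w != 0 by apply: contraTneq (nonconst g g_deg) => wz; rewrite gE wz mul0r eqxx.
apply: (IH (phi_lc w) p pP _ w erefl).
- by rewrite -gc gE phi_lcM /phi_lc (phiC pA) lead_coefC.
- by rewrite -g_deg gE phi_degM // (eqP (_ : phi_deg p == 0%N)) ?addn0 ?phi_deg_eq0.
- by apply/eqP; move: pi_g; rewrite gE rmorphM (pi_id pA) => /eqP; rewrite mulf_eq0 (negPf p0) orbF.
Qed.

End MinimalDegree.

Hypothesis phi_nontrivial : ~ exp_map_is_id phi.

Lemma exp_retract_poly_ring : is_poly_ring_in_one_var_over A.
Proof.
have [b phib] := not_all_ex_not _ _ phi_nontrivial.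
have bNA : b \notin A by apply/negP => /phi_invariant.
have [d [[g0 [g0NA g0_deg]] d_min]] := ex_minn_prop
  (P := fun n => exists g, g \notin A /\ phi_deg g = n) (ex_intro _ b (conj bNA erefl)).
have d_gt0 : (0 < d)%N by rewrite lt0n -g0_deg phi_deg_eq0.
have d_min' c : c \notin A -> (d <= phi_deg c)%N by move=> cNA; apply: d_min; exists c.
have [g [g_deg pi_g g_lc]] := exists_generator d_gt0 g0_deg.
have gNA : g \notin A by rewrite -phi_deg_eq0 g_deg -lt0n.
exists g; split=> [c|P]; last exact: phi_transcendental.
by have [Q QA ->] := in_adjoin_all d_gt0 d_min' g0_deg g_deg pi_g g_lc c; exists Q.
Qed.

End ExponentialMap.
End Subring.

(** * Polynomial rings in one variable *)

Section PolynomialRing.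
Variable B : idomainType.
Variable A : {pred B}.
Hypothesis A_subring : subring_closed A.
#[local] HB.instance Definition _ := GRing.isSubringClosed.Build B A A_subring.

Variable T : B.
Hypothesis T_gen : forall b : B, exists p : {poly B}, p \is a polyOver A /\ b = p.[T].
Hypothesis T_transcendental : forall p : {poly B}, p \is a polyOver A -> p.[T] = 0 -> p = 0.

Lemma T_genP b : exists p : {poly B}, (p \is a polyOver A) && (p.[T] == b).
Proof. by have [p [pA ->]] := T_gen b; exists p; rewrite pA eqxx. Qed.

Definition coord_poly b := xchoose (T_genP b).

Lemma coord_poly_over b : coord_poly b \is a polyOver A.
Proof. by have /andP[] := xchooseP (T_genP b). Qed.

Lemma coord_polyK b : (coord_poly b).[T] = b.
Proof. by have /andP[_ /eqP] := xchooseP (T_genP b). Qed.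

Lemma coord_poly_unique b p : p \is a polyOver A -> p.[T] = b -> coord_poly b = p.
Proof.
move=> pA pT; apply/eqP; rewrite -subr_eq0; apply/eqP/T_transcendental.
  by rewrite rpredB ?coord_poly_over.
by rewrite hornerD hornerN coord_polyK pT subrr.
Qed.

Lemma coord_poly_is_zmod_morphism : zmod_morphism coord_poly.
Proof.
move=> x y; apply: coord_poly_unique; first by rewrite rpredB ?coord_poly_over.
by rewrite hornerD hornerN !coord_polyK.
Qed.

Lemma coord_poly_is_monoid_morphism : monoid_morphism coord_poly.
Proof.
split=> [|x y]; first by apply: coord_poly_unique; rewrite ?rpred1 ?hornerC.
by apply: coord_poly_unique; rewrite ?rpredM ?coord_poly_over // hornerM !coord_polyK.
Qed.

HB.instance Definition _ := GRing.isZmodMorphism.Build B {poly B} coord_poly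
  coord_poly_is_zmod_morphism.
HB.instance Definition _ := GRing.isMonoidMorphism.Build B {poly B} coord_poly
  coord_poly_is_monoid_morphism.

Lemma coord_polyC a : a \in A -> coord_poly a = a%:P.
Proof. by move=> aA; apply: coord_poly_unique; rewrite ?polyOverC ?hornerC. Qed.

Lemma coord_polyT : coord_poly T = 'X.
Proof. by apply: coord_poly_unique; rewrite ?polyOverX ?hornerX. Qed.

Definition retraction : {rmorphism B -> B} := horner_eval 0 \o coord_poly.

Lemma retract_poly_ring : is_retract A.
Proof.
have pi_id a : a \in A -> retraction a = a.
  by move=> aA; rewrite /= horner_evalE coord_polyC // hornerC.
have pi_mem b : retraction b \in A.
  by rewrite /= horner_evalE horner_coef0 (polyOverP (coord_poly_over b)).
exists retraction; split=> [b|x]; first by rewrite pi_id.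
by split=> [/pi_id <-|[b <-]]; [exists x | apply: pi_mem].
Qed.

Definition translation : {rmorphism B -> {poly B}} := comp_poly (T%:P + 'X) \o coord_poly.

Lemma translationC a : a \in A -> translation a = a%:P.
Proof. by move=> aA; rewrite /= coord_polyC // comp_polyC. Qed.

Lemma translationT : translation T = T%:P + 'X.
Proof. by rewrite /= coord_polyT comp_polyX. Qed.

Lemma map_translation p : p \is a polyOver A -> map_poly translation p = p^:P.
Proof. by move=> pA; apply/polyP => i; rewrite !coef_map; apply: translationC (polyOverP pA i). Qed.

Lemma translation_exp_map : is_exp_map A translation.
Proof.
split=> [|b|b]; first exact: translationC.
  by rewrite /= horner_comp hornerD hornerC hornerX addr0 coord_polyK.
have pA := coord_poly_over b; set p := coord_poly b in pA *.
rewrite /= -/p map_comp_poly (map_translation pA) rmorphD /= map_polyX map_polyC /=.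
rewrite coord_polyT comp_polyX map_comp_poly -comp_polyA; congr (_ \Po _).
by rewrite !rmorphD /= map_polyC map_polyX /= comp_polyC comp_polyX; ring.
Qed.

Lemma translation_nontrivial : ~ exp_map_is_id translation.
Proof.
move=> /(_ T) /(congr1 (fun q : {poly B} => q`_1)).
by rewrite translationT coefD coefC coefX add0r => /eqP; rewrite oner_eq0.
Qed.

Lemma translation_invariants b : b \in A <-> b \in invariants translation.
Proof.
rewrite /invariants unfold_in; split=> [bA|/eqP bE]; first exact/eqP/translationC.
have xT2 : size (T%:P + 'X) = 2 by rewrite addrC size_XaddC.
have : (size (coord_poly b) <= 1)%N.
  by rewrite -(size_comp_poly2 _ xT2) -[_ \Po _]/(translation b) bE size_polyC_leq1.
move/size1_polyC => bC; rewrite -(coord_polyK b) bC hornerC.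
exact: (polyOverP (coord_poly_over b)).
Qed.

Lemma poly_ring_exp_retract : is_retract A /\ exists phi : {rmorphism B -> {poly B}},
  [/\ is_exp_map A phi, ~ exp_map_is_id phi & forall b, b \in A <-> b \in invariants phi].
Proof.
split; first exact: retract_poly_ring.
by exists translation; split; [exact: translation_exp_map | exact: translation_nontrivial |
  exact: translation_invariants].
Qed.

End PolynomialRing.

Theorem proposition4p2 :
  (forall (B : idomainType) (A : pred B),
     is_UFD B -> subring_closed A ->
     ((is_retract A /\
       exists phi : {rmorphism B -> {poly B}},
         is_exp_map A phi /\ ~ exp_map_is_id phi /\
         (forall b, b \in A <-> b \in invariants phi))
      <-> is_poly_ring_in_one_var_over A))
  /\
  (forall (R : idomainType) (n : nat) (A : pred (poly_ring_n R n)),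
     is_UFD R -> subring_closed A -> (forall r : R, const_n n r \in A) ->
     (is_retract A /\
       exists phi : {rmorphism (poly_ring_n R n) -> {poly (poly_ring_n R n)}},
         is_exp_map A phi /\ ~ exp_map_is_id phi /\
         (forall b, b \in A <-> b \in invariants phi)) ->
     is_poly_ring_in_one_var_over A).
Proof.
split=> [B A B_UFD A_subring | R n A R_UFD A_subring _].
  split=> [[[pi [pi_idem pi_im]] [phi [phi_exp [phi_nontrivial A_invariants]]]]|].
    apply: (exp_retract_poly_ring A_subring phi_exp A_invariants pi_idem pi_im) => //.
    exact: UFD_factorial.
  move=> [T [T_gen T_transcendental]].
  have [A_retract [phi [phi_exp phi_nontrivial A_invariants]]] :=
    poly_ring_exp_retract A_subring T_gen T_transcendental.
  by split=> //; exists phi.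
move=> [[pi [pi_idem pi_im]] [phi [phi_exp [phi_nontrivial A_invariants]]]].
apply: (exp_retract_poly_ring A_subring phi_exp A_invariants pi_idem pi_im) => //.
exact/factorial_poly_ring_n/UFD_factorial.
Qed.
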